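(* Let $I$ be a partially ordered set and let $E$ be a locally convex space which admits an $I$-decreasing base of neighbourhoods of zero. Then $E$ has an $\mathbb{N}^I$-increasing family of bounded sets covering $E$ which swallows all bounded subsets of $E$. Consequently, the strong dual $E'_\beta$ of $E$ has an $\mathbb{N}^I$-decreasing base of neighbourhoods of zero.
   Context: All locally convex spaces are Hausdorff. For a partially ordered set $I$, a family $\{A_i\}_{i\in I}$ of sets is $I$-increasing (resp. $I$-decreasing) if $A_i\subseteq A_j$ (resp. $A_i\supseteq A_j$) whenever $i\le j$. The set $\mathbb{N}^I$ is ordered pointwise: $\alpha\le\beta$ iff $\alpha(i)\le\beta(i)$ for all $i\in I$. A family $\{A_j\}$ swallows a family $\mathcal{B}$ if every $B\in\mathcal{B}$ is contained in some $A_j$. $E'_\beta=(E',\beta(E',E))$ is the topological dual with the topology of uniform convergence on bounded subsets of $E$. *)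

From HB Require Import structures.
From mathcomp Require Import all_boot all_order all_algebra.
From mathcomp Require Import all_classical all_reals all_analysis.
Set Implicit Arguments. Unset Strict Implicit. Unset Printing Implicit Defensive.
Import Order.TTheory GRing.Theory Num.Theory.
Local Open Scope classical_set_scope.
Local Open Scope ring_scope.

Definition tvs_bounded (R : realType) (E : tvsType R) (B : set E) : Prop :=
  forall U : set E, nbhs (0 : E) U ->
    exists r : R, 0 < r /\
      forall l : R, r <= `|l| -> B `<=` [set l *: u | u in U].

Definition decreasing_nbhs0_base (d : Order.disp_t) (I : porderType d)
    (R : realType) (E : tvsType R) (U : I -> set E) : Prop :=
  [/\ (forall i, nbhs (0 : E) (U i)),
      (forall W : set E, nbhs (0 : E) W -> exists i, U i `<=` W) &
      (forall i j : I, (i <= j)%O -> U j `<=` U i)].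

Definition le_NI (I : Type) (a b : I -> nat) : Prop := forall i, (a i <= b i)%N.

Definition tvs_dual (R : realType) (E : tvsType R) : set (E -> R^o) :=
  [set f | linear f /\ continuous f].

(* The space of all functions E -> R with the topology of uniform convergence
   on bounded subsets of E; E'_beta is the subspace @tvs_dual R E of it. *)
Notation strong_fun R E := {family @tvs_bounded R E, E -> R^o}.

Definition strong_dual_decreasing_nbhs0_base (I : Type)
    (R : realType) (E : tvsType R) (V : (I -> nat) -> set (E -> R^o)) : Prop :=
  [/\ (forall a, V a `<=` @tvs_dual R E),
      (forall a, exists W : set (strong_fun R E),
          nbhs ((fun=> 0) : strong_fun R E) W /\ V a = W `&` @tvs_dual R E),
      (forall W : set (strong_fun R E),
          nbhs ((fun=> 0) : strong_fun R E) W -> exists a, V a `<=` W) &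
      (forall a b, le_NI a b -> V b `<=` V a)].

(** Given a base (U_i) of neighbourhoods of zero, put
    B_a := {x | x ∈ l U_i whenever |l| >= a(i) + 1}  for a ∈ N^I.
    Each B_a is bounded because the U_i form a base, B_a grows with a, and a
    bounded set A lies in B_a as soon as a(i) exceeds the absorption radius of
    U_i for A; singletons being bounded, the B_a cover E.  Since every bounded
    set is swallowed, the absolute polars of the B_a, which are strong
    neighbourhoods of zero, form an N^I-decreasing base of E'_beta: a basic
    neighbourhood {f : |f| < e on A} contains the polar of any B_a swallowing
    (2/e) A. *)

From HB Require Import structures.
From mathcomp Require Import all_boot all_order all_algebra.
From mathcomp Require Import all_classical all_reals all_analysis.
Set Implicit Arguments.
Unset Strict Implicit.
Unset Printing Implicit Defensive.

Import Order.TTheory GRing.Theory Num.Theory.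
Local Open Scope classical_set_scope.
Local Open Scope ring_scope.

Section BoundedSets.
Context (R : realType) (E : tvsType R).

Lemma tvs_bounded_set0 : tvs_bounded (set0 : set E).
Proof. by move=> W W0; exists 1; split => // l _ x. Qed.

Lemma tvs_bounded_set1 (x : E) : tvs_bounded [set x].
Proof.
move=> U U0.
(* By continuity of scaling at (0, x), l^-1 *: x lies in U once |l^-1| < e. *)
have := @scale_continuous R E (0, x) U.
rewrite /= scale0r => /(_ U0) [] /= B [B1 B2] BU.
move/nbhs_ballP: B1 => [e e0 Be].
exists (2 / e); split; first by rewrite divr_gt0.
move=> l hl y -> {y}.
have l0 : l != 0.
  by apply: contraTneq hl => ->; rewrite normr0 -ltNge divr_gt0.
exists (l^-1 *: x); last by rewrite scalerA divff // scale1r.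
apply: (BU (l^-1, x)); split => /=; last exact: nbhs_singleton.
apply: Be; rewrite -ball_normE /= sub0r normrN normrV ?unitfE //.
rewrite -[ltLHS]div1r ltr_pdivrMr ?normr_gt0 //.
apply: (lt_le_trans _ (ler_wpM2l (ltW e0) hl)).
by rewrite mulrCA divff ?gt_eqF // mulr1 ltr1n.
Qed.

Lemma tvs_boundedU (A B : set E) :
  tvs_bounded A -> tvs_bounded B -> tvs_bounded (A `|` B).
Proof.
move=> Ab Bb W W0; have [r1 [r10 h1]] := Ab W W0; have [r2 [_ h2]] := Bb W W0.
exists (Num.max r1 r2); split; first by rewrite lt_max r10.
by move=> l; rewrite ge_max => /andP[l1 l2] x [/h1|/h2]; apply.
Qed.

Lemma tvs_boundedZ (A : set E) (c : R) :
  c != 0 -> tvs_bounded A -> tvs_bounded [set c *: x | x in A].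
Proof.
move=> c0 Ab W W0; have [r [r0 hr]] := Ab W W0.
exists (r * `|c|); split; first by rewrite mulr_gt0 ?normr_gt0.
move=> l hl _ [x Ax <-].
have : r <= `|l / c| by rewrite normrM normrV ?unitfE // ler_pdivlMr ?normr_gt0.
move=> /hr /(_ x Ax) [u Wu hu]; exists u => //.
by rewrite -hu scalerA mulrCA divff // mulr1.
Qed.

End BoundedSets.

Section StrongTopology.
Context (R : realType) (E : tvsType R).

Definition absolute_polar (A : set E) : set (E -> R^o) :=
  [set f | forall x, A x -> `|f x| <= 1].

Lemma absolute_polar_sub (A B : set E) :
  A `<=` B -> absolute_polar B `<=` absolute_polar A.
Proof. by move=> AB f fB x /AB /fB. Qed.

Lemma linear_absolute_polarZ (f : E -> R^o) (A : set E) (c : R) :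
  linear f -> 0 < c -> absolute_polar [set c *: x | x in A] f ->
  forall x, A x -> `|f x| <= c^-1.
Proof.
move=> linf c0 fA x Ax.
pose F : {linear E -> R^o} := HB.pack f (GRing.isLinear.Build _ _ _ _ f linf).
have := fA (c *: x) (ex_intro2 _ _ x Ax erefl).
rewrite [f _](linearZ_LR F) normrM gtr0_norm //.
by rewrite -ler_pdivlMl // mulr1.
Qed.

Lemma absolute_polar_nbhs0 (A : set E) :
  tvs_bounded A -> nbhs ((fun=> 0) : strong_fun R E) (absolute_polar A).
Proof.
move=> Ab; apply: filterS (fam_nbhs _ (entourage_ball _ 1%:pos) Ab).
move=> g gA x /gA; rewrite /= -ball_normE /= sub0r normrN.
exact: ltW.
Qed.

Definition uniformly_small_on_bounded : set_system (E -> R^o) :=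
  [set W | exists2 A, tvs_bounded A & exists2 e : R, 0 < e &
    [set g | forall x, A x -> `|g x| < e] `<=` W].

Lemma uniformly_small_on_bounded_filter : Filter uniformly_small_on_bounded.
Proof.
split.
- by exists set0; [exact: tvs_bounded_set0 | exists 1].
- move=> W1 W2 [A1 A1b [e1 e1p s1]] [A2 A2b [e2 e2p s2]].
  exists (A1 `|` A2); first exact: tvs_boundedU.
  exists (Num.min e1 e2); first by rewrite lt_min e1p.
  move=> g gA; split; [apply: s1 | apply: s2] => x Ax.
    by have /(_ (or_introl Ax)) := gA x; rewrite lt_min => /andP[].
  by have /(_ (or_intror Ax)) := gA x; rewrite lt_min => /andP[].
- move=> P Q PQ [A Ab [e e0 sP]]; exists A => //; exists e => //.
  exact: subset_trans PQ.
Qed.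

Lemma strong_nbhs0_uniformly_small (W : set (strong_fun R E)) :
  nbhs ((fun=> 0) : strong_fun R E) W -> uniformly_small_on_bounded W.
Proof.
have small_filter := uniformly_small_on_bounded_filter.
suff cvg0 : {family @tvs_bounded R E,
    uniformly_small_on_bounded --> ((fun=> 0) : E -> R^o)} by exact: cvg0.
apply/fam_cvgP => A Ab P /uniform_nbhs [D [entD DP]].
rewrite -entourage_from_ballE in entD; case: entD => e e0 De.
exists A => //; exists e => // g gA; apply: DP => y Ay; apply: De.
by rewrite /= -ball_normE /= sub0r normrN; exact: gA.
Qed.

Lemma strong_nbhs0_sub_polar (J : Type) (B : J -> set E)
    (W : set (strong_fun R E)) :
  (forall A, tvs_bounded A -> exists j, A `<=` B j) ->
  nbhs ((fun=> 0) : strong_fun R E) W ->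
  exists j, absolute_polar (B j) `&` @tvs_dual R E `<=` W.
Proof.
move=> Bsw /strong_nbhs0_uniformly_small [A Ab [e e0 AW]].
have c0 : 0 < 2 / e by rewrite divr_gt0.
have [j Aj] := Bsw _ (tvs_boundedZ (lt0r_neq0 c0) Ab).
exists j => f [fB [linf _]]; apply: AW => x Ax.
have := linear_absolute_polarZ linf c0 (absolute_polar_sub Aj fB) Ax.
move/le_lt_trans; apply.
by rewrite invf_div ltr_pdivrMr // ltr_pMr // ltr1n.
Qed.

End StrongTopology.

Section AbsorbedSets.
Context (d : Order.disp_t) (I : porderType d) (R : realType) (E : tvsType R).
Variable U : I -> set E.

Definition absorbed_at (a : I -> nat) : set E :=
  [set x | forall i (l : R), (a i)%:R + 1 <= `|l| -> [set l *: u | u in U i] x].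

Lemma absorbed_at_le a b : le_NI a b -> absorbed_at a `<=` absorbed_at b.
Proof.
move=> ab x Bx i l hl; apply: Bx; apply: le_trans hl.
by rewrite lerD2r ler_nat.
Qed.

Lemma absorbed_at_bounded a :
  (forall W : set E, nbhs (0 : E) W -> exists i, U i `<=` W) ->
  tvs_bounded (absorbed_at a).
Proof.
move=> base W W0; have [i UW] := base W W0.
exists ((a i)%:R + 1); split; first by rewrite ltr_wpDl.
move=> l hl x Bx; have [u Uu <-] := Bx i l hl.
by exists u => //; apply: UW.
Qed.

Lemma absorbed_at_swallow (A : set E) : (forall i, nbhs (0 : E) (U i)) ->
  tvs_bounded A -> exists a, A `<=` absorbed_at a.
Proof.
move=> Unbhs Ab.
have /choice [r hr] : forall i, exists r : R, 0 < r /\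
    forall l : R, r <= `|l| -> A `<=` [set l *: u | u in U i].
  by move=> i; apply: Ab.
exists (fun i => Num.truncn (r i)) => x Ax i l hl.
apply: (proj2 (hr i) l) => //; apply: le_trans hl.
by rewrite natr1 ltW // truncnS_gt.
Qed.

End AbsorbedSets.

Theorem proposition2p1 (d : Order.disp_t) (I : porderType d)
    (R : realType) (E : tvsType R) :
  hausdorff_space E ->
  (exists U : I -> set E, decreasing_nbhs0_base U) ->
  (exists B : (I -> nat) -> set E,
      [/\ (forall a, tvs_bounded (B a)),
          (forall a b, le_NI a b -> B a `<=` B b),
          (forall x : E, exists a, B a x) &
          (forall A : set E, tvs_bounded A -> exists a, A `<=` B a)])
  /\ (exists V : (I -> nat) -> set (E -> R^o),
        strong_dual_decreasing_nbhs0_base V).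
Proof.
move=> _ [U [Unbhs base _]]; split.
  exists (absorbed_at U); split=> [a||x|A]; first exact: absorbed_at_bounded.
  - exact: absorbed_at_le.
  - by have [a /(_ x erefl)] := absorbed_at_swallow Unbhs (tvs_bounded_set1 x); exists a.
  - exact: absorbed_at_swallow.
exists (fun a => absolute_polar (absorbed_at U a) `&` @tvs_dual R E); split.
- by move=> a f [].
- move=> a; exists (absolute_polar (absorbed_at U a)).
  by split; first exact: absolute_polar_nbhs0 (absorbed_at_bounded a base).
- by move=> W; apply: strong_nbhs0_sub_polar => A; apply: absorbed_at_swallow.
- move=> a b ab f [fB Df]; split=> //.
  exact: absolute_polar_sub (absorbed_at_le ab) _ fB.
Qed.
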